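(* Let $p\ge1$ and let $n\ge1$ be a natural number whose Zeckendorf representation is $[n]=\varepsilon_p\varepsilon_{p-1}\cdots\varepsilon_1$ with $\varepsilon_p=1$. Then for every word $u\in(\vartheta_1^p(b))^{\varepsilon_p}(\vartheta_1^{p-1}(b))^{\varepsilon_{p-1}}\cdots(\vartheta_1(b))^{\varepsilon_1}$, at least one of the words $uab$ or $uba$ is a prefix of some word in $\vartheta_1^{p+1}(a)$.
   Context: Fibonacci numbers: $f_0=f_1=1$, $f_n=f_{n-1}+f_{n-2}$ for $n\ge2$. Every positive integer $n$ has a unique Zeckendorf representation $n=\sum_{i=1}^r\varepsilon_if_i$ with $\varepsilon_i\in\{0,1\}$, $\varepsilon_r=1$ and $\varepsilon_i\varepsilon_{i+1}=0$; one writes $[n]=\varepsilon_r\cdots\varepsilon_1$. The random Fibonacci substitution is $\vartheta_1\colon a\mapsto\{ab,ba\},\ b\mapsto\{a\}$, extended to words by set concatenation ($AB=\{xy\mid x\in A,y\in B\}$) and to sets by unions; $\vartheta_1^p$ is its $p$-fold iterate. For a set $A$ of words, $A^0=\{\text{empty word}\}$ and $A^{k}=A\cdots A$ ($k$ factors). Note $|\vartheta_1^i(b)|=f_i$ for all words in that set. *)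

From HB Require Import structures.
From mathcomp Require Import all_boot.
Set Implicit Arguments. Unset Strict Implicit. Unset Printing Implicit Defensive.

Fixpoint fib (n : nat) : nat :=
  match n with
  | 0 | 1 => 1
  | (m.+1 as k).+1 => fib k + fib m
  end.

Inductive letter := la | lb.

Definition letter_to_bool (x : letter) : bool := if x is la then true else false.
Definition bool_to_letter (x : bool) : letter := if x then la else lb.
Lemma letter_boolK : cancel letter_to_bool bool_to_letter.
Proof. by case. Qed.
HB.instance Definition _ := Equality.copy letter (can_type letter_boolK).

Definition word := seq letter.
(* finite sets of words, represented by (possibly repeating) lists; membership via \in *)
Definition wset := seq word.

Definition setcat (A B : wset) : wset := [seq x ++ y | x <- A, y <- B].

Definition setpow (A : wset) (k : nat) : wset := iter k (setcat A) [:: [::]].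

Definition theta_letter (c : letter) : wset :=
  match c with
  | la => [:: [:: la; lb]; [:: lb; la]]
  | lb => [:: [:: la]]
  end.

Definition theta_word (w : word) : wset :=
  foldr (fun c S => setcat (theta_letter c) S) [:: [::]] w.

Definition theta_set (S : wset) : wset := flatten [seq theta_word w | w <- S].

Definition thetap (p : nat) (c : letter) : wset := iter p theta_set [:: [:: c]].

Definition zeckendorf (n p : nat) (eps : nat -> bool) : Prop :=
  [/\ n = \sum_(1 <= i < p.+1) eps i * fib i,
      eps p &
      forall i, 1 <= i < p -> ~~ (eps i && eps i.+1)].

Fixpoint zprod (eps : nat -> bool) (k : nat) : wset :=
  match k with
  | 0 => [:: [::]]
  | k'.+1 => setcat (setpow (thetap k lb) (eps k)) (zprod eps k')
  end.

(* Since a |-> ab and a |-> ba are both allowed, theta^(m+1)(a) contains both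
   theta^m(a) theta^m(b) and theta^m(b) theta^m(a).  Call u extendable at level m
   when uab or uba is a prefix of a word of theta^m(a).  Appending a word of
   theta^m(b) to the witness lifts extendability from level m to m+1, and
   prepending a word of theta^m(b) to an extendable u gives an extendable word at
   level m+1.  Starting from the empty word at level 1 and adding the factors
   (theta^k(b))^eps_k one at a time, every word of the product is extendable at
   level k+1. *)

From mathcomp Require Import all_boot.

Lemma setcatP (A B : wset) z :
  reflect (exists x y, [/\ x \in A, y \in B & z = x ++ y]) (z \in setcat A B).
Proof.
apply: (iffP allpairsP) => [[[x y] /= [hx hy ->]]|[x [y [hx hy ->]]]].
  by exists x, y.
by exists (x, y).
Qed.

Lemma mem_setcat (A B : wset) x y : x \in A -> y \in B -> x ++ y \in setcat A B.
Proof. by move=> hx hy; apply/setcatP; exists x, y. Qed.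

Lemma setpow1 (A : wset) : setpow A 1 = A.
Proof. by rewrite /setpow /= /setcat; elim: A => //= x A ->; rewrite cats0. Qed.

Lemma theta_setP S x :
  reflect (exists2 w, w \in S & x \in theta_word w) (x \in theta_set S).
Proof. exact: flatten_mapP. Qed.

Lemma theta_word_cat w1 w2 x y :
  x \in theta_word w1 -> y \in theta_word w2 -> x ++ y \in theta_word (w1 ++ w2).
Proof.
elim: w1 x => [|c w1 IH] x /=; first by rewrite inE => /eqP ->.
move=> /setcatP [x1 [x2 [h1 h2 ->]]] hy.
by rewrite -catA; apply: mem_setcat => //; apply: IH.
Qed.

Lemma theta_word_neq0 w : exists x, x \in theta_word w.
Proof.
elim: w => [|c w [x hx]] /=; first by exists [::]; rewrite inE.
by case: c; [exists ([:: la; lb] ++ x) | exists ([:: la] ++ x)];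
  apply: mem_setcat; rewrite ?inE ?eqxx.
Qed.

Lemma iter_theta_set_cat k w1 w2 x y :
  x \in iter k theta_set [:: w1] -> y \in iter k theta_set [:: w2] ->
  x ++ y \in iter k theta_set [:: w1 ++ w2].
Proof.
elim: k x y => [|k IH] x y; first by rewrite /= !inE => /eqP -> /eqP ->.
move=> /theta_setP [x0 hx0 hx] /theta_setP [y0 hy0 hy].
apply/theta_setP; exists (x0 ++ y0); first exact: IH.
exact: theta_word_cat.
Qed.

Lemma iter_theta_set_neq0 k w : exists x, x \in iter k theta_set [:: w].
Proof.
elim: k => [|k [x hx]]; first by exists w; rewrite inE.
have [y hy] := theta_word_neq0 x.
by exists y; apply/theta_setP; exists x.
Qed.

Lemma iter_theta_set_subset k (S T : wset) :
  {subset S <= T} -> {subset iter k theta_set S <= iter k theta_set T}.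
Proof.
move=> sST; elim: k => [|k IH] //= x /theta_setP [w hw hx].
by apply/theta_setP; exists w => //; apply: IH.
Qed.

Lemma thetapS_la (w : word) k x :
  w \in theta_letter la -> x \in iter k theta_set [:: w] -> x \in thetap k.+1 la.
Proof.
move=> hw; rewrite /thetap iterSr; apply: iter_theta_set_subset => z.
rewrite inE => /eqP ->.
by rewrite -[theta_set _]/(setpow (theta_letter la) 1 ++ [::]) cats0 setpow1.
Qed.

Lemma thetapS_cat_ab k x y :
  x \in thetap k la -> y \in thetap k lb -> x ++ y \in thetap k.+1 la.
Proof.
move=> hx hy; apply: (@thetapS_la [:: la; lb]); first by rewrite inE eqxx.
exact: (@iter_theta_set_cat k [:: la] [:: lb] x y hx hy).
Qed.

Lemma thetapS_cat_ba k x y :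
  x \in thetap k lb -> y \in thetap k la -> x ++ y \in thetap k.+1 la.
Proof.
move=> hx hy; apply: (@thetapS_la [:: lb; la]); first by rewrite !inE eqxx orbT.
exact: (@iter_theta_set_cat k [:: lb] [:: la] x y hx hy).
Qed.

Definition ab_ba_extendable (m : nat) (u : word) : Prop :=
  exists2 v, v \in thetap m la &
    prefix (u ++ [:: la; lb]) v || prefix (u ++ [:: lb; la]) v.

Lemma ab_ba_extendable_nil : ab_ba_extendable 1 [::].
Proof. by exists [:: la; lb]; rewrite ?inE ?eqxx ?prefix_refl. Qed.

Lemma ab_ba_extendableS m u : ab_ba_extendable m u -> ab_ba_extendable m.+1 u.
Proof.
move=> [v hv pre_v]; have [y hy] := iter_theta_set_neq0 m [:: lb].
exists (v ++ y); first exact: thetapS_cat_ab.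
by case/orP: pre_v => /(prefix_catl y) ->; rewrite ?orbT.
Qed.

Lemma ab_ba_extendable_cat m x u :
  x \in thetap m lb -> ab_ba_extendable m u -> ab_ba_extendable m.+1 (x ++ u).
Proof.
move=> hx [v hv pre_v]; exists (x ++ v); first exact: thetapS_cat_ba.
by rewrite -!catA !prefix_catr ?eqxx.
Qed.

Lemma ab_ba_extendable_zprod (eps : nat -> bool) k u :
  u \in zprod eps k -> ab_ba_extendable k.+1 u.
Proof.
elim: k u => [|k IH] u /=; first by rewrite inE => /eqP ->; exact: ab_ba_extendable_nil.
move=> /setcatP [x [u' [hx hu' ->]]].
case: (eps k.+1) hx => [|]; last by rewrite inE => /eqP ->; apply/ab_ba_extendableS/IH.
by rewrite setpow1 => hx; apply: ab_ba_extendable_cat => //; apply: IH.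
Qed.

Theorem mainTheorem4 (p n : nat) (eps : nat -> bool) :
  1 <= p -> 1 <= n -> zeckendorf n p eps ->
  forall u, u \in zprod eps p ->
  exists2 v, v \in thetap p.+1 la &
    prefix (u ++ [:: la; lb]) v || prefix (u ++ [:: lb; la]) v.
Proof. by move=> _ _ _ u; apply: ab_ba_extendable_zprod. Qed.
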